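(* Let $\mathcal{A}$ be a normal cyclotomic $S$-ring with trivial radical over a finite cyclic group $G$, and let $K\le\mathrm{Aut}(G)$ be such that $\mathcal{A}=\mathrm{Cyc}(K,G)$. Then $\mathrm{Aut}(\mathcal{A})=G_{right}\rtimes K$.
   Context: An $S$-ring over $G$ is a subring $\mathcal{A}\subseteq\mathbb{Z}G$ spanned by the elements $\underline{X}=\sum_{x\in X}x$ for $X$ in a partition $\mathcal{S}(\mathcal{A})$ of $G$ (basic sets) with $\{e\}\in\mathcal{S}(\mathcal{A})$ and closed under $X\mapsto X^{-1}$. For $K\le\mathrm{Aut}(G)$, $\mathrm{Cyc}(K,G)$ is the $S$-ring whose basic sets are the $K$-orbits; $\mathcal{A}$ is cyclotomic if it equals $\mathrm{Cyc}(K,G)$ for some $K$. For $X\in\mathcal{S}(\mathcal{A})$ let $r(X)=\{(g,xg):g\in G,x\in X\}$; $\mathrm{Aut}(\mathcal{A})$ is the group of permutations $f$ of $G$ with $r(X)^f=r(X)$ for all basic sets $X$. $G_{right}$ is the group of right multiplications $g\mapsto gh$, $h\in G$. $\mathcal{A}$ is normal if $G_{right}$ is normal in $\mathrm{Aut}(\mathcal{A})$. For $X\subseteq G$, $\mathrm{rad}(X)=\{g\in G:gX=Xg=X\}$; the radical of $\mathcal{A}$ (over cyclic $G$) is $\mathrm{rad}(X)$ for a basic set $X$ containing a generator of $G$, and it is trivial if it equals $\{e\}$. *)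

From mathcomp Require Import all_boot all_fingroup all_solvable.
Set Implicit Arguments. Unset Strict Implicit. Unset Printing Implicit Defensive.
Local Open Scope group_scope.

(* The finite group G is the whole finGroupType gT, i.e. G = [set: gT]. *)
Section SRings.
Variable gT : finGroupType.

(* S-ring given by its family S of basic sets: a partition of G containing {e},
   closed under X |-> X^-1, whose span is a subring of ZG (the coefficient of z
   in X*Y, i.e. #{(x,y) in X x Y | x y = z}, is constant on each basic set). *)
Definition is_Sring (S : {set {set gT}}) : Prop :=
  [/\ partition S [set: gT],
      [set 1] \in S,
      (forall X, X \in S -> X^-1 \in S) &
      (forall X Y Z, X \in S -> Y \in S -> Z \in S ->
        forall z z', z \in Z -> z' \in Z ->
          #|[set p in setX X Y | p.1 * p.2 == z]| =
          #|[set p in setX X Y | p.1 * p.2 == z']|)].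

Definition Cyc (K : {set {perm gT}}) : {set {set gT}} :=
  [set orbit 'P K x | x : gT].

Definition rX (X : {set gT}) : {set gT * gT} :=
  [set (g, x * g) | g in [set: gT], x in X].

Definition AutS (S : {set {set gT}}) : {set {perm gT}} :=
  [set f : {perm gT} | [forall X in S,
     [set (f p.1, f p.2) | p in rX X] == rX X]].

Definition Gright : {set {perm gT}} := [set perm (mulIg h) | h : gT].

Definition normal_Sring (S : {set {set gT}}) : Prop := Gright <| AutS S.

Definition rad (X : {set gT}) : {set gT} :=
  [set g | (g *: X == X) && (X :* g == X)].

Definition trivial_radical (S : {set {set gT}}) : Prop :=
  exists2 X, X \in S &
    (exists2 x, x \in X & generator [set: gT] x) /\ rad X = 1.

End SRings.

From mathcomp Require Import all_boot all_fingroup all_solvable.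
Local Open Scope group_scope.
Set Implicit Arguments. Unset Strict Implicit.

(* Right multiplications preserve every r(X), and K preserves its own orbits,
   so G_right K <= Aut(A). Conversely, every f in Aut(A) factors as f = g r
   with r a right multiplication and g fixing e. Since g normalises G_right,
   g(zh) = g(z) g(h), so g is an automorphism of G. It maps a generator x into
   the basic set of x, which is the K-orbit of x, so g agrees with some k in K
   on x and hence everywhere. Automorphisms fix e while nontrivial right
   multiplications do not, so the product G_right K is semidirect. *)

Section CyclotomicSringAut.
Variable gT : finGroupType.
Implicit Types (S : {set {set gT}}) (X : {set gT}) (f : {perm gT}).

Lemma mem_rX X a b : ((a, b) \in rX X) = (b * a^-1 \in X).
Proof.
apply/imset2P/idP => [[g x _ Xx [-> ->]] | Xba]; first by rewrite mulgK.
by exists a (b * a^-1); rewrite ?mulgKV.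
Qed.

Lemma AutSP S f :
  reflect (forall X, X \in S -> forall a b, b * a^-1 \in X -> f b * (f a)^-1 \in X)
          (f \in AutS S).
Proof.
rewrite inE; apply: (iffP forallP) => [fS X XS a b Xba | fS X].
  move/implyP/(_ XS)/eqP: (fS X) => fX.
  by rewrite -mem_rX -fX; apply/imsetP; exists (a, b); rewrite ?mem_rX.
apply/implyP => XS; rewrite eqEcard card_imset; last first.
  by move=> [a b] [c d] [/perm_inj-> /perm_inj->].
rewrite leqnn andbT; apply/subsetP => _ /imsetP[[a b] Xab ->].
by rewrite mem_rX fS // -mem_rX.
Qed.

Lemma AutS_group_set S : group_set (AutS S).
Proof.
apply/group_setP; split=> [|f g /AutSP fS /AutSP gS]; apply/AutSP.
  by move=> X _ a b; rewrite !perm1.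
by move=> X XS a b Xba; rewrite !permM; apply/gS/fS.
Qed.

Canonical AutS_group S := Group (AutS_group_set S).

Lemma AutS_fix1_basic S f X y :
  f \in AutS S -> f 1 = 1 -> X \in S -> y \in X -> f y \in X.
Proof.
move=> /AutSP fS f1 XS Xy.
by have := fS X XS 1 y; rewrite f1 !invg1 !mulg1; apply.
Qed.

Lemma Gright_morphim : Gright gT = actperm 'R @* [set: gT].
Proof.
have actpermR h : perm (mulIg h) = actperm 'R h.
  by apply/permP => x; rewrite permE actpermE.
rewrite morphimEdom; apply/setP => p.
by apply/imsetP/imsetP => -[h _ ->]; exists h; rewrite ?inE ?actpermR.
Qed.

Lemma Gright_group_set : group_set (Gright gT).
Proof. by rewrite Gright_morphim; apply: groupP. Qed.

Canonical Gright_group := Group Gright_group_set.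

Lemma Gright_sub_AutS S : Gright gT \subset AutS S.
Proof.
rewrite Gright_morphim; apply/subsetP => _ /morphimP[h _ _ ->].
by apply/AutSP => X _ a b; rewrite !actpermE /= invMg mulgA mulgK.
Qed.

Lemma Gright_Aut_TI : Gright gT :&: Aut [set: gT] \subset [1].
Proof.
apply/subsetP => p /setIP[]; rewrite Gright_morphim.
case/morphimP=> h _ _ -> /Aut_morphic/morphicP morph_h.
have := morph1 (Morphism morph_h); rewrite /= actpermE /= mul1g => ->.
by rewrite morph1 inE.
Qed.

Lemma norm_Gright_Aut f :
  f 1 = 1 -> f \in 'N(Gright gT) -> f \in Aut [set: gT].
Proof.
move=> f1 fN; rewrite inE; apply/andP; split; first exact/subsetP.
apply/morphicP => z h _ _.
have: actperm 'R h ^ f \in Gright gT.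
  by rewrite memJ_norm // Gright_morphim mem_morphim ?inE.
rewrite Gright_morphim => /morphimP[h' _ _ hJ].
have f_mulh w : f (w * h) = f w * h'.
  by rewrite -[_ * h']/('R%act (f w) h') -actpermE -hJ permJ actpermE.
by rewrite f_mulh -[h]mul1g f_mulh f1 mul1g.
Qed.

Lemma Aut_cycle_eq (x : gT) f g :
  f \in Aut <[x]> -> g \in Aut <[x]> -> f x = g x -> f = g.
Proof.
move=> Af Ag fx_gx; apply: (eq_Aut Af Ag) => _ /cycleP[n ->].
by rewrite -(autmE Af) -(autmE Ag) !morphX ?cycle_id //= !autmE fx_gx.
Qed.

Lemma Cyc_basic_stable (K : {group {perm gT}}) X k y :
  X \in Cyc K -> k \in K -> y \in X -> k y \in X.
Proof. by move=> /imsetP[z _ ->] Kk; rewrite -[k y]/(aperm y k) orbit_actr. Qed.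

Lemma Aut_sub_AutS_Cyc (K : {group {perm gT}}) :
  K \subset Aut [set: gT] -> K \subset AutS (Cyc K).
Proof.
move=> KAut; apply/subsetP => k Kk; apply/AutSP => X XS a b Xba.
have /Aut_morphic/morphicP morph_k := subsetP KAut k Kk.
pose km := Morphism morph_k.
rewrite -[k b]/(km b) -[k a]/(km a) -morphV ?inE // -morphM ?inE //=.
exact: Cyc_basic_stable XS Kk Xba.
Qed.

Section Stabiliser.
Variables (x : gT) (K : {group {perm gT}}).
Hypotheses (genx : [set: gT] = <[x]>) (KAut : K \subset Aut [set: gT]).
Hypothesis nGright : AutS (Cyc K) \subset 'N(Gright gT).

Lemma Cyc_Aut_norm_Gright : K \subset 'N(Gright gT).
Proof. exact: subset_trans (Aut_sub_AutS_Cyc KAut) nGright. Qed.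

Lemma AutS_Cyc_fix1 f : f \in AutS (Cyc K) -> f 1 = 1 -> f \in K.
Proof.
move=> fA f1; have fAut := norm_Gright_Aut f1 (subsetP nGright f fA).
have Kx : orbit 'P K x \in Cyc K by apply: imset_f.
have /orbitP[k Kk kx] := AutS_fix1_basic fA f1 Kx (orbit_refl _ _ _).
have kAut := subsetP KAut k Kk; rewrite genx in fAut kAut.
by rewrite (Aut_cycle_eq fAut kAut (esym kx)).
Qed.

Lemma AutS_Cyc_mul : AutS (Cyc K) = Gright gT * K.
Proof.
apply/eqP; rewrite eqEsubset mul_subG ?Gright_sub_AutS ?Aut_sub_AutS_Cyc //.
rewrite andbT -(normC Cyc_Aut_norm_Gright); apply/subsetP => f fA.
set r := actperm 'R (f 1).
have Rr : r \in Gright gT by rewrite Gright_morphim mem_morphim ?inE.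
have Ar := subsetP (Gright_sub_AutS (Cyc K)) r Rr.
rewrite -(mulgKV r f) mem_mulg //.
apply: AutS_Cyc_fix1; first by rewrite groupM ?groupV.
by rewrite permM -morphV ?inE // actpermE /= mulgV.
Qed.

End Stabiliser.

End CyclotomicSringAut.

Theorem lemma6p5 (gT : finGroupType) (S : {set {set gT}}) (K : {group {perm gT}}) :
  cyclic [set: gT] ->
  is_Sring S ->
  K \subset Aut [set: gT] ->
  S = Cyc K ->
  normal_Sring S ->
  trivial_radical S ->
  AutS S = Gright gT ><| K.
Proof.
move=> /cyclicP[x genx] _ KAut -> /andP[_ nGright] _.
rewrite (AutS_Cyc_mul genx KAut nGright) sdprodE ?(Cyc_Aut_norm_Gright KAut nGright) //.
by apply/trivgP; apply: subset_trans (Gright_Aut_TI gT); rewrite setIS.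
Qed.
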